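(* Let $n\ge1$ and $\kappa\in I'_n$. Then $$\frac{1}{(2\pi)^n}\,c^{(n)}_\kappa\,\mathbf{e}\!\left[\frac12\sum_{l=1}^n\left(\omega^{(n)}_{\kappa,l}-\frac12\right)\right]\frac{1}{d_n}\,c^{(n)}_{d_n-\kappa}=\frac{1}{d_n}\,p_n\!\left(\mathbf{e}\!\left[(-1)^{n-1}\omega^{(n)}_{\kappa,1}\right]\right).$$
   Context: Fix integers $a_1,\dots,a_n\ge2$, $d_0=1$, $d_i=a_1\cdots a_i$, $\mathbf{e}[\alpha]=\exp(2\pi\sqrt{-1}\alpha)$. $I'_n=\{\kappa\in\{1,\dots,d_n\}\mid a_n\nmid\kappa\}$ (note $d_n-\kappa\in I'_n$ for $\kappa\in I'_n$). For $\kappa\in I'_n$, $\omega^{(n)}_{\kappa,i}=(-1)^{i-1}\frac{d_{i-1}}{d_n}\kappa-\lfloor(-1)^{i-1}\frac{d_{i-1}}{d_n}\kappa\rfloor$; $c^{(n)}_\kappa=\prod_{l=1}^n\Gamma(1-\omega^{(n)}_{\kappa,l})\cdot\prod_{i=1}^m(1-\mathbf{e}[\omega^{(n)}_{\kappa,2i-1}])$ if $n=2m-1$ and $c^{(n)}_\kappa=\prod_{l=1}^n\Gamma(1-\omega^{(n)}_{\kappa,l})\cdot\prod_{i=1}^m(1-\mathbf{e}[\omega^{(n)}_{\kappa,2i}])$ if $n=2m$. $p_n(t)=\prod_{i=1}^n(1-t^{d_{i-1}})^{(-1)^{n-i}}$ (a polynomial in $t$). *)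

From Stdlib Require Import Reals Lra Lia.
From Coquelicot Require Import Coquelicot.
Open Scope R_scope.

(* Euler Gamma function on the reals: Gamma x = int_0^oo t^(x-1) e^(-t) dt
   (used only at arguments x in (0,1], where the integral converges). *)
Definition Gamma (x : R) : R :=
  RInt_gen (fun t => Rpower t (x - 1) * exp (- t)) (at_right 0) (Rbar_locally p_infty).

Definition ee (alpha : R) : C := (cos (2 * PI * alpha), sin (2 * PI * alpha)).

Definition frac (x : R) : R := x - IZR (Int_part x).

Fixpoint cprod (k : nat) (f : nat -> C) : C :=
  match k with O => RtoC 1 | S k' => Cmult (cprod k' f) (f k) end.

Fixpoint dd (a : nat -> nat) (i : nat) : nat :=
  match i with O => 1%nat | S i' => (dd a i' * a i)%nat end.

Definition omega (a : nat -> nat) (n kappa i : nat) : R :=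
  frac ((-1) ^ (i - 1) * INR (dd a (i - 1)) / INR (dd a n) * INR kappa).

Definition cc (a : nat -> nat) (n kappa : nat) : C :=
  Cmult (cprod n (fun l => RtoC (Gamma (1 - omega a n kappa l))))
    (if Nat.odd n then
       cprod ((n + 1) / 2) (fun i => Cminus (RtoC 1) (ee (omega a n kappa (2 * i - 1))))
     else
       cprod (n / 2) (fun i => Cminus (RtoC 1) (ee (omega a n kappa (2 * i))))).

(* p_n(t) = prod_{i=1}^n (1 - t^{d_{i-1}})^{(-1)^{n-i}}, evaluated as a rational
   function (exponent -1 = complex inverse). *)
Definition pp (a : nat -> nat) (n : nat) (t : C) : C :=
  cprod n (fun i =>
    let b := Cminus (RtoC 1) (Cpow t (dd a (i - 1))) in
    if Nat.even (n - i) then b else Cinv b).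

(* For 0 < w < 1, Euler's reflection formula Gamma(w) Gamma(1 - w) = PI / sin(PI w)
   turns (2 PI)^-1 Gamma(1 - w) Gamma(w) e[(w - 1/2)/2] into 1 / (1 - e[-w]).  As
   omega_{d_n - kappa, l} = 1 - omega_{kappa, l}, both sides then factor over l = 1..n:
   the factors 1 - e[omega_l] of c_kappa and 1 - e[-omega_l] of c_{d_n - kappa} occur
   exactly when n - l is even, and since omega_l = (-1)^(l-1) d_{l-1} kappa / d_n mod 1,
   the argument of p_n raised to the power d_{l-1} is e[(-1)^(n-l) omega_l].

   The reflection formula is the limit of the identity relating the Gauss products
   (n+1)^x (n+1)! / (x (x+1) ... (x+n+1)) -> Gamma(x), obtained by comparing the Gamma
   integral with the integrals of t^(x-1) (1 - t/N)^N, to the partial products of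
   Euler's sine product prod (1 - x^2/k^2) -> sin(PI x) / (PI x), obtained from the
   Wallis integrals of cos(x t) cos(t)^m over [0, PI/2]. *)

From Stdlib Require Import Reals Lra Lia Factorial ZArith.
From Coquelicot Require Import Coquelicot.
Open Scope R_scope.

(* Coquelicot states many equalities at a carrier that is only convertible to
   [R]; [ring] and [field] need them at type [R]. *)
Ltac as_R_eq := match goal with |- @eq _ ?l ?r => change (@eq R l r) end.

Ltac continuous_by_derive :=
  apply (ex_derive_continuous (K := R_AbsRing) (V := R_NormedModule)); auto_derive.

Lemma is_RInt_antiderivative (F f : R -> R) (a b : R) : a <= b ->
  (forall t, a <= t <= b -> is_derive F t (f t)) ->
  (forall t, a <= t <= b -> continuous f t) ->
  is_RInt f a b (F b - F a).
Proof.
  intros Hab HF Hf.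
  apply (is_RInt_derive F f); intros t Ht; rewrite Rmin_left, Rmax_right in Ht by lra; auto.
Qed.

Lemma ex_RInt_continuous_on (f : R -> R) (a b : R) : a <= b ->
  (forall t, a <= t <= b -> continuous f t) -> ex_RInt f a b.
Proof.
  intros Hab Hf.
  apply (ex_RInt_continuous (V := R_CompleteNormedModule)).
  intros t Ht; rewrite Rmin_left, Rmax_right in Ht by lra; auto.
Qed.

Lemma eventually_div_INR_lt (c eps : R) : 0 < eps ->
  exists N, forall n, (N <= n)%nat -> c / INR (S n) < eps.
Proof.
  intros Heps. destruct (INR_unbounded (Rabs c / eps)) as [N HN].
  exists N. intros n Hn.
  assert (HNn : INR N <= INR n) by (apply le_INR; lia).
  assert (Hpos : INR (S n) > 0) by (apply lt_0_INR; lia).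
  apply Rlt_div_l; [exact Hpos|].
  apply Rle_lt_trans with (Rabs c); [apply Rle_abs|].
  rewrite S_INR in *. apply Rlt_div_l in HN; [|exact Heps]. nra.
Qed.

Lemma is_lim_seq_of_bound (u : nat -> R) (l c : R) :
  (forall n, Rabs (u n - l) <= c / INR (S n)) -> is_lim_seq u l.
Proof.
  intros Hu. apply is_lim_seq_spec. intros eps.
  destruct (eventually_div_INR_lt c eps (cond_pos eps)) as [N HN].
  exists N. intros n Hn. eapply Rle_lt_trans; [apply Hu | apply HN, Hn].
Qed.

Lemma INR_S_ge_1 (n : nat) : 1 <= INR (S n).
Proof. rewrite S_INR. pose proof (pos_INR n). lra. Qed.

Lemma Rdiv_unit_interval (t N : R) : 0 <= t <= N -> 0 < N -> 0 <= t / N <= 1.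
Proof.
  intros Ht HN. split; [apply Rdiv_le_0_compat; lra | apply Rle_div_l; lra].
Qed.

Lemma bernoulli_ineq (x : R) (k : nat) : -1 <= x -> 1 + INR k * x <= (1 + x) ^ k.
Proof.
  intros Hx. induction k as [|k IHk]; cbn [pow]; [simpl; lra|].
  rewrite S_INR. pose proof (pos_INR k).
  assert (0 <= INR k * (x * x)) by (apply Rmult_le_pos; nra).
  apply Rmult_le_compat_l with (r := 1 + x) in IHk; nra.
Qed.

Lemma Rpower_gt_0 (t y : R) : 0 < Rpower t y.
Proof. apply exp_pos. Qed.

Lemma Rpower_plus_1 (t y : R) : 0 < t -> Rpower t (y + 1) = Rpower t y * t.
Proof. intros Ht. rewrite Rpower_plus, Rpower_1 by exact Ht. reflexivity. Qed.

Lemma Rpower_minus_1 (t y : R) : 0 < t -> Rpower t (y - 1) = Rpower t y / t.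
Proof.
  intros Ht. replace y with (y - 1 + 1) at 2 by ring.
  rewrite Rpower_plus_1 by exact Ht. field. lra.
Qed.

Lemma Rpower_le_1 (t y : R) : 0 <= y -> 0 < t <= 1 -> Rpower t y <= 1.
Proof.
  intros Hy Ht. apply Rle_trans with (Rpower 1 y); [apply Rle_Rpower_l; lra|].
  unfold Rpower. rewrite ln_1, Rmult_0_r, exp_0. lra.
Qed.

Lemma Rpower_small (x eta : R) : 0 < x -> 0 < eta ->
  exists d, 0 < d <= 1 /\ forall a, 0 < a <= d -> Rpower a x <= eta.
Proof.
  intros Hx Heta. exists (Rmin 1 (exp (ln eta / x))). split.
  - split; [apply Rmin_pos; [lra | apply exp_pos] | apply Rmin_l].
  - intros a Ha.
    assert (Hle : a <= exp (ln eta / x)) by (eapply Rle_trans; [apply Ha | apply Rmin_r]).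
    rewrite <- (exp_ln eta) by exact Heta. unfold Rpower.
    assert (Hln : ln a <= ln eta / x) by (rewrite <- (ln_exp (ln eta / x)); apply ln_le; lra).
    apply Rmult_le_compat_l with (r := x) in Hln; [|lra].
    replace (x * (ln eta / x)) with (ln eta) in Hln by (field; lra).
    destruct Hln as [Hlt | ->]; [left; apply exp_increasing; exact Hlt | right; reflexivity].
Qed.

(** * Gauss's limit formula for Gamma *)

(* [rising y m] is y (y + 1) ... (y + m): it has m + 1 factors. *)
Fixpoint rising (y : R) (m : nat) : R :=
  match m with O => y | S m' => y * rising (y + 1) m' end.

Lemma rising_gt_0 (m : nat) (y : R) : 0 < y -> 0 < rising y m.
Proof.
  revert y; induction m as [|m IHm]; intros y Hy; simpl; [lra|].
  apply Rmult_lt_0_compat; [lra | apply IHm; lra].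
Qed.

Lemma rising_S (m : nat) (y : R) : rising y (S m) = rising y m * (y + INR (S m)).
Proof.
  revert y; induction m as [|m IHm]; intros y; [simpl; ring|].
  change (rising y (S (S m))) with (y * rising (y + 1) (S m)).
  rewrite IHm. change (rising y (S m)) with (y * rising (y + 1) m).
  rewrite !S_INR. ring.
Qed.

Lemma truncated_beta_by_parts (N y a : R) (m : nat) : 0 < y -> 0 < a <= N ->
  is_RInt (fun t => Rpower t (y - 1) * (1 - t / N) ^ S m
                    - INR (S m) / (y * N) * (Rpower t y * (1 - t / N) ^ m)) a N
    (- (Rpower a y / y * (1 - a / N) ^ S m)).
Proof.
  intros Hy Ha.
  replace (- _) with (Rpower N y / y * (1 - N / N) ^ S m - Rpower a y / y * (1 - a / N) ^ S m)
    by (replace (1 - N / N) with 0 by (field; lra); rewrite pow_i by lia; ring).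
  apply (is_RInt_antiderivative (fun t => Rpower t y / y * (1 - t / N) ^ S m)); [lra | |].
  - intros t Ht. rewrite Rpower_minus_1 by lra. unfold Rpower. auto_derive; [lra|].
    change (match m with 0%nat => 1 | S _ => INR m + 1 end) with (INR (S m)).
    rewrite <- ?tech_pow_Rmult, ?S_INR. as_R_eq.
    unfold Rminus, Rdiv. field. lra.
  - intros t Ht. unfold Rpower. continuous_by_derive. lra.
Qed.

Lemma is_RInt_Rpower_pred (y a b : R) : 0 < y -> 0 < a <= b ->
  is_RInt (fun t => Rpower t (y - 1)) a b (Rpower b y / y - Rpower a y / y).
Proof.
  intros Hy Hab. apply (is_RInt_antiderivative (fun t => Rpower t y / y)); [lra | |].
  - intros t Ht. rewrite Rpower_minus_1 by lra. unfold Rpower. auto_derive; [lra|].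
    as_R_eq. field. lra.
  - intros t Ht. unfold Rpower. continuous_by_derive. lra.
Qed.

Lemma truncated_beta_error_bound (N y a E : R) (m : nat) :
  0 < y -> 0 < a <= 1 -> a <= N -> INR (S m) <= N ->
  0 <= E <= Rpower a (y + 1) * (INR m + 1) / (y + 1) ->
  0 <= Rpower a y / y * (1 - a / N) ^ S m + INR (S m) / (y * N) * E
    <= Rpower a y * (INR (S m) + 1) / y.
Proof.
  intros Hy Ha HaN Hm HE. pose proof (Rpower_gt_0 a y). pose proof (pos_INR m).
  rewrite S_INR in *.
  assert (Hpow : 0 <= (1 - a / N) ^ S m <= 1).
  { pose proof (Rdiv_unit_interval a N ltac:(lra) ltac:(lra)).
    split; [apply pow_le | apply Rle_trans with (1 ^ S m); [apply pow_incr | rewrite pow1]]; lra. }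
  assert (Hc : 0 <= (INR m + 1) / (y * N) <= / y).
  { split; [apply Rdiv_le_0_compat; [| apply Rmult_lt_0_compat]; lra |].
    apply Rle_div_l; [apply Rmult_lt_0_compat; lra|].
    replace (/ y * (y * N)) with N by (field; lra). lra. }
  assert (HEy : E <= Rpower a y * (INR m + 1)).
  { rewrite Rpower_plus_1 in HE by lra. eapply Rle_trans; [apply HE|].
    apply Rle_div_l; [lra|].
    assert (0 <= Rpower a y * (INR m + 1)) by (apply Rmult_le_pos; lra). nra. }
  assert (0 <= Rpower a y / y) by (apply Rdiv_le_0_compat; lra).
  replace (Rpower a y * (INR m + 1 + 1) / y)
    with (Rpower a y / y + / y * (Rpower a y * (INR m + 1))) by (field; lra).
  split; [apply Rplus_le_le_0_compat; nra |].
  apply Rplus_le_compat; [nra|]. apply Rmult_le_compat; lra.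
Qed.

(* Integration by parts lowers m and raises y; E collects the boundary terms at a. *)
Lemma truncated_beta_integral (N : R) (m : nat) : INR m <= N ->
  forall y a, 0 < y -> 0 < a <= 1 -> a <= N ->
  exists E, 0 <= E <= Rpower a y * (INR m + 1) / y /\
    is_RInt (fun t => Rpower t (y - 1) * (1 - t / N) ^ m) a N
      (Rpower N y * INR (fact m) / rising y m - E).
Proof.
  induction m as [|m IHm]; intros Hm y a Hy Ha HaN.
  - exists (Rpower a y / y). pose proof (Rpower_gt_0 a y). split.
    + split; [apply Rlt_le, Rdiv_lt_0_compat |]; simpl; lra.
    + replace (Rpower N y * INR (fact 0) / rising y 0 - Rpower a y / y)
        with (Rpower N y / y - Rpower a y / y) by (simpl; field; lra).
      eapply is_RInt_ext; [| apply is_RInt_Rpower_pred; lra]. intros t _. simpl. ring.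
  - destruct (IHm ltac:(rewrite S_INR in Hm; lra) (y + 1) a ltac:(lra) Ha HaN) as [E' [HE' HI]].
    replace (y + 1 - 1) with y in HI by ring.
    set (c := INR (S m) / (y * N)).
    pose proof (is_RInt_plus _ _ _ _ _ _ (truncated_beta_by_parts N y a m Hy ltac:(lra))
                  (is_RInt_scal _ _ _ c _ HI)) as Hsum.
    change (plus ?u ?v) with (u + v) in Hsum. change (scal ?u ?v) with (u * v) in Hsum.
    exists (Rpower a y / y * (1 - a / N) ^ S m + c * E').
    split; [apply truncated_beta_error_bound; auto|].
    replace (Rpower N y * INR (fact (S m)) / rising y (S m)
             - (Rpower a y / y * (1 - a / N) ^ S m + c * E'))
      with (- (Rpower a y / y * (1 - a / N) ^ S m)
            + c * (Rpower N (y + 1) * INR (fact m) / rising (y + 1) m - E')).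
    + eapply is_RInt_ext; [|exact Hsum]. intros t _. unfold c. as_R_eq. ring.
    + unfold c. rewrite Rpower_plus_1 by lra.
      change (fact (S m)) with (S m * fact m)%nat. rewrite mult_INR.
      change (rising y (S m)) with (y * rising (y + 1) m).
      pose proof (rising_gt_0 m (y + 1) ltac:(lra)).
      as_R_eq. field. repeat split; lra.
Qed.

Lemma exp_pow (u : R) (k : nat) : exp u ^ k = exp (u * INR k).
Proof.
  induction k as [|k IHk]; cbn [pow].
  - rewrite Rmult_0_r, exp_0. reflexivity.
  - rewrite IHk, <- exp_plus, S_INR. f_equal. ring.
Qed.

Lemma pow_one_minus_div_le_exp (K : nat) (t : R) : (1 <= K)%nat -> 0 <= t <= INR K ->
  (1 - t / INR K) ^ K <= exp (- t).
Proof.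
  intros HK Ht. assert (HN : 0 < INR K) by (apply lt_0_INR; lia).
  pose proof (Rdiv_unit_interval t (INR K) Ht HN).
  replace (exp (- t)) with (exp (- t / INR K) ^ K) by (rewrite exp_pow; f_equal; field; lra).
  apply pow_incr. pose proof (exp_ineq1_le (- t / INR K)). unfold Rdiv in *. lra.
Qed.

Lemma exp_sub_pow_one_minus_div_le (K : nat) (t : R) : (1 <= K)%nat -> 0 <= t <= INR K ->
  exp (- t) - (1 - t / INR K) ^ K <= t ^ 2 * exp (- t) / INR K.
Proof.
  intros HK Ht. assert (HN : 0 < INR K) by (apply lt_0_INR; lia).
  pose proof (Rdiv_unit_interval t (INR K) Ht HN) as Htn.
  assert (Hplus : (1 + t / INR K) ^ K <= exp t).
  { replace (exp t) with (exp (t / INR K) ^ K) by (rewrite exp_pow; f_equal; field; lra).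
    apply pow_incr. pose proof (exp_ineq1_le (t / INR K)). lra. }
  assert (Hprod : 1 - t ^ 2 / INR K <= (1 + t / INR K) ^ K * (1 - t / INR K) ^ K).
  { rewrite <- Rpow_mult_distr.
    replace ((1 + t / INR K) * (1 - t / INR K)) with (1 + - (t / INR K) ^ 2) by (field; lra).
    replace (1 - t ^ 2 / INR K) with (1 + INR K * - (t / INR K) ^ 2) by (field; lra).
    apply bernoulli_ineq. nra. }
  assert (Hpow : 0 <= (1 - t / INR K) ^ K) by (apply pow_le; lra).
  assert (Hexp : exp (- t) * exp t = 1) by (rewrite <- exp_plus, Rplus_opp_l; apply exp_0).
  pose proof (exp_pos (- t)).
  assert (exp (- t) * (1 - t ^ 2 / INR K) <= (1 - t / INR K) ^ K).
  { replace ((1 - t / INR K) ^ K) with (exp (- t) * (exp t * (1 - t / INR K) ^ K))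
      by (rewrite <- Rmult_assoc, Hexp; ring).
    apply Rmult_le_compat_l; nra. }
  unfold Rdiv in *. nra.
Qed.

Definition gamma_integrand (x t : R) : R := Rpower t (x - 1) * exp (- t).

Lemma gamma_integrand_continuous (x t : R) : 0 < t -> continuous (gamma_integrand x) t.
Proof. intros Ht. unfold gamma_integrand, Rpower. continuous_by_derive. lra. Qed.

Lemma ex_RInt_gamma_integrand (x a b : R) : 0 < a <= b -> ex_RInt (gamma_integrand x) a b.
Proof.
  intros Hab. apply ex_RInt_continuous_on; [lra|].
  intros t Ht. apply gamma_integrand_continuous. lra.
Qed.

Lemma Rpower_pred_mul_sq_le (x t : R) : 0 < x < 1 -> 0 < t -> Rpower t (x - 1) * t ^ 2 <= 1 + t ^ 2.
Proof.
  intros Hx Ht.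
  replace (Rpower t (x - 1) * t ^ 2) with (Rpower t (x + 1))
    by (replace (x + 1) with (x - 1 + 1 + 1) by ring; rewrite !Rpower_plus_1 by lra; ring).
  destruct (Rle_dec t 1) as [Ht1 | Ht1].
  - pose proof (Rpower_le_1 t (x + 1) ltac:(lra) ltac:(lra)). nra.
  - assert (Hle : Rpower t (x + 1) <= Rpower t 2) by (apply Rle_Rpower; lra).
    replace (Rpower t 2) with (t ^ 2) in Hle
      by (rewrite <- Rpower_pow by lra; f_equal; simpl; ring).
    lra.
Qed.

Lemma gamma_integrand_sub_truncated (x : R) (K : nat) (t : R) :
  0 < x < 1 -> (1 <= K)%nat -> 0 < t <= INR K ->
  0 <= gamma_integrand x t - Rpower t (x - 1) * (1 - t / INR K) ^ K
    <= (1 + t ^ 2) * exp (- t) / INR K.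
Proof.
  intros Hx HK Ht. assert (HN : 0 < INR K) by (apply lt_0_INR; lia).
  unfold gamma_integrand.
  pose proof (pow_one_minus_div_le_exp K t HK ltac:(lra)).
  pose proof (exp_sub_pow_one_minus_div_le K t HK ltac:(lra)).
  pose proof (Rpower_gt_0 t (x - 1)). pose proof (exp_pos (- t)).
  pose proof (Rpower_pred_mul_sq_le x t Hx ltac:(lra)).
  rewrite <- Rmult_minus_distr_l. split; [nra|].
  apply Rle_trans with (Rpower t (x - 1) * (t ^ 2 * exp (- t) / INR K)).
  - apply Rmult_le_compat_l; lra.
  - unfold Rdiv. rewrite <- !Rmult_assoc.
    apply Rmult_le_compat_r; [apply Rlt_le, Rinv_0_lt_compat; lra|].
    apply Rmult_le_compat_r; lra.
Qed.

Lemma is_RInt_quadratic_exp (a b : R) : a <= b ->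
  is_RInt (fun t => (1 + t ^ 2) * exp (- t)) a b
    ((a ^ 2 + 2 * a + 3) * exp (- a) - (b ^ 2 + 2 * b + 3) * exp (- b)).
Proof.
  intros Hab.
  replace ((a ^ 2 + 2 * a + 3) * exp (- a) - (b ^ 2 + 2 * b + 3) * exp (- b))
    with (- (b ^ 2 + 2 * b + 3) * exp (- b) - - (a ^ 2 + 2 * a + 3) * exp (- a)) by ring.
  apply (is_RInt_antiderivative (fun t => - (t ^ 2 + 2 * t + 3) * exp (- t))); [lra | |].
  - intros t _. auto_derive; [auto|]. as_R_eq. ring.
  - intros t _. continuous_by_derive. auto.
Qed.

Lemma gamma_truncation_gap (x a : R) (K : nat) (I : R) :
  0 < x < 1 -> (1 <= K)%nat -> 0 < a <= 1 ->
  is_RInt (fun t => Rpower t (x - 1) * (1 - t / INR K) ^ K) a (INR K) I ->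
  0 <= RInt (gamma_integrand x) a (INR K) - I <= 6 / INR K.
Proof.
  intros Hx HK Ha HI.
  assert (HN : 1 <= INR K) by (apply (le_INR 1) in HK; simpl in HK; exact HK).
  pose proof (RInt_correct _ _ _ (ex_RInt_gamma_integrand x a (INR K) ltac:(lra))) as Hg.
  pose proof (is_RInt_minus _ _ _ _ _ _ Hg HI) as HD.
  pose proof (is_RInt_scal _ _ _ (/ INR K) _ (is_RInt_quadratic_exp a (INR K) ltac:(lra))) as HV.
  change (minus ?u ?v) with (u - v) in HD. change (scal ?u ?v) with (u * v) in HV.
  assert (Hpt : forall t, a < t < INR K ->
            0 <= gamma_integrand x t - Rpower t (x - 1) * (1 - t / INR K) ^ K
              <= / INR K * ((1 + t ^ 2) * exp (- t))).
  { intros t Ht. replace (/ INR K * ((1 + t ^ 2) * exp (- t)))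
      with ((1 + t ^ 2) * exp (- t) / INR K) by (unfold Rdiv; ring).
    apply gamma_integrand_sub_truncated; auto; lra. }
  split.
  - apply (is_RInt_ge_0 _ a (INR K) _ ltac:(lra) HD). intros t Ht. apply Hpt, Ht.
  - eapply Rle_trans; [apply (is_RInt_le _ _ a (INR K) _ _ ltac:(lra) HD HV) |].
    + intros t Ht. apply Hpt, Ht.
    + assert (exp (- a) <= 1) by (rewrite <- exp_0; apply Rlt_le, exp_increasing; lra).
      pose proof (exp_pos (- a)). pose proof (exp_pos (- INR K)).
      assert (0 <= (INR K ^ 2 + 2 * INR K + 3) * exp (- INR K)) by (apply Rmult_le_pos; nra).
      unfold Rdiv. rewrite (Rmult_comm 6).
      apply Rmult_le_compat_l; [apply Rlt_le, Rinv_0_lt_compat; lra | nra].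
Qed.

Lemma gamma_tail_bound (x N b : R) : 0 < x < 1 -> 1 <= N <= b ->
  0 <= RInt (gamma_integrand x) N b <= / N.
Proof.
  intros Hx HNb.
  pose proof (RInt_correct _ _ _ (ex_RInt_gamma_integrand x N b ltac:(lra))) as Hg.
  split.
  - apply (is_RInt_ge_0 _ N b _ ltac:(lra) Hg). intros t _.
    apply Rmult_le_pos; apply Rlt_le, exp_pos.
  - apply Rle_trans with (exp (- N) - exp (- b)).
    + apply (is_RInt_le _ (fun t => exp (- t)) N b _ _ ltac:(lra) Hg).
      * replace (exp (- N) - exp (- b)) with (- exp (- b) - - exp (- N)) by ring.
        apply (is_RInt_antiderivative (fun t => - exp (- t))); [lra | |].
        -- intros t _. auto_derive; [auto|]. as_R_eq. ring.
        -- intros t _. continuous_by_derive. auto.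
      * intros t Ht. unfold gamma_integrand.
        assert (Rpower t (x - 1) <= 1)
          by (apply Rle_trans with (Rpower t 0); [apply Rle_Rpower | rewrite Rpower_O]; lra).
        pose proof (exp_pos (- t)). nra.
    + pose proof (exp_pos (- b)). pose proof (exp_ineq1_le N).
      rewrite exp_Ropp. assert (/ exp N <= / N) by (apply Rinv_le_contravar; lra). lra.
Qed.

Definition gauss_seq (x : R) (n : nat) : R :=
  Rpower (INR (S n)) x * INR (fact (S n)) / rising x (S n).

Lemma RInt_gamma_integrand_gauss_seq_bound (x a b : R) (n : nat) :
  0 < x < 1 -> 0 < a <= 1 -> INR (S n) <= b ->
  Rabs (RInt (gamma_integrand x) a b - gauss_seq x n)
    <= 7 / INR (S n) + Rpower a x * (INR (S n) + 1) / x.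
Proof.
  intros Hx Ha Hb. pose proof (INR_S_ge_1 n) as HN.
  destruct (truncated_beta_integral (INR (S n)) (S n) (Rle_refl _) x a ltac:(lra) Ha ltac:(lra))
    as [E [HE HI]].
  pose proof (gamma_truncation_gap x a (S n) _ Hx ltac:(lia) Ha HI) as Hgap.
  pose proof (gamma_tail_bound x (INR (S n)) b Hx ltac:(lra)) as Htail.
  rewrite <- (RInt_Chasles (gamma_integrand x) a (INR (S n)) b)
    by (apply ex_RInt_gamma_integrand; lra).
  change (plus ?u ?v) with (u + v). unfold gauss_seq.
  apply Rabs_le. unfold Rdiv in *. split; lra.
Qed.

Lemma gauss_seq_near_integral (x : R) (n : nat) (eps : R) : 0 < x < 1 -> 0 < eps ->
  exists d, 0 < d <= 1 /\ forall a b, 0 < a <= d -> INR (S n) <= b ->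
    Rabs (RInt (gamma_integrand x) a b - gauss_seq x n) <= 7 / INR (S n) + eps.
Proof.
  intros Hx Heps. pose proof (INR_S_ge_1 n) as HN.
  destruct (Rpower_small x (eps * x / (INR (S n) + 1)) ltac:(lra)) as [d [Hd Hsmall]].
  { apply Rdiv_lt_0_compat; nra. }
  exists d. split; [exact Hd|]. intros a b Ha Hb.
  eapply Rle_trans; [apply RInt_gamma_integrand_gauss_seq_bound; auto; lra|].
  apply Rplus_le_compat_l. apply Rle_div_l; [lra|].
  specialize (Hsmall a Ha). apply Rle_div_r in Hsmall; lra.
Qed.

Lemma gauss_seq_cauchy (x : R) (n m : nat) : 0 < x < 1 ->
  Rabs (gauss_seq x n - gauss_seq x m) <= 7 / INR (S n) + 7 / INR (S m).
Proof.
  intros Hx. apply Rle_plus_epsilon. intros eps Heps.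
  destruct (gauss_seq_near_integral x n (eps / 2) Hx ltac:(lra)) as [d1 [Hd1 Hn]].
  destruct (gauss_seq_near_integral x m (eps / 2) Hx ltac:(lra)) as [d2 [Hd2 Hm]].
  set (a := Rmin d1 d2). set (b := INR (S n) + INR (S m)).
  assert (0 < a) by (apply Rmin_pos; lra).
  pose proof (Rmin_l d1 d2). pose proof (Rmin_r d1 d2).
  pose proof (INR_S_ge_1 n). pose proof (INR_S_ge_1 m).
  specialize (Hn a b ltac:(unfold a in *; lra) ltac:(unfold b; lra)).
  specialize (Hm a b ltac:(unfold a in *; lra) ltac:(unfold b; lra)).
  replace (gauss_seq x n - gauss_seq x m)
    with (- (RInt (gamma_integrand x) a b - gauss_seq x n)
          + (RInt (gamma_integrand x) a b - gauss_seq x m))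
    by ring.
  eapply Rle_trans; [apply Rabs_triang|]. rewrite Rabs_Ropp. lra.
Qed.

Lemma ex_finite_lim_gauss_seq (x : R) : 0 < x < 1 -> ex_finite_lim_seq (gauss_seq x).
Proof.
  intros Hx. apply ex_lim_seq_cauchy_corr. intros eps.
  destruct (eventually_div_INR_lt 7 (eps / 2) ltac:(pose proof (cond_pos eps); lra)) as [N HN].
  exists N. intros n m Hn Hm.
  eapply Rle_lt_trans; [apply gauss_seq_cauchy, Hx|].
  pose proof (HN n Hn). pose proof (HN m Hm). lra.
Qed.

Lemma is_RInt_gen_gamma_integrand (x L : R) : 0 < x < 1 -> is_lim_seq (gauss_seq x) L ->
  is_RInt_gen (gamma_integrand x) (at_right 0) (Rbar_locally p_infty) L.
Proof.
  intros Hx HL. apply filterlimi_locally. intros eps. pose proof (cond_pos eps) as Heps.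
  apply is_lim_seq_spec in HL. destruct (HL (mkposreal (eps / 3) ltac:(lra))) as [N1 HN1].
  destruct (eventually_div_INR_lt 7 (eps / 3) ltac:(lra)) as [N2 HN2].
  set (n := max N1 N2).
  assert (HJ : Rabs (gauss_seq x n - L) < eps / 3) by (apply HN1; unfold n; lia).
  assert (H7 : 7 / INR (S n) < eps / 3) by (apply HN2; unfold n; lia).
  destruct (gauss_seq_near_integral x n (eps / 3) Hx ltac:(lra)) as [d [Hd Hnear]].
  apply (Filter_prod _ _ _ (fun a => 0 < a <= d) (fun b => INR (S n) < b)).
  - exists (mkposreal d ltac:(lra)). intros a Ha Hpos. simpl in Ha.
    change (Rabs (a - 0) < d) in Ha. rewrite Rminus_0_r, Rabs_pos_eq in Ha by lra. lra.
  - exists (INR (S n)). auto.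
  - intros a b Ha Hb. exists (RInt (gamma_integrand x) a b). split.
    + apply (RInt_correct (V := R_CompleteNormedModule)), ex_RInt_gamma_integrand.
      pose proof (INR_S_ge_1 n). lra.
    + specialize (Hnear a b Ha ltac:(lra)). change (Rabs (RInt (gamma_integrand x) a b - L) < eps).
      replace (RInt (gamma_integrand x) a b - L)
        with ((RInt (gamma_integrand x) a b - gauss_seq x n) + (gauss_seq x n - L)) by ring.
      eapply Rle_lt_trans; [apply Rabs_triang|]. lra.
Qed.

Lemma is_lim_seq_gauss_seq (x : R) : 0 < x < 1 -> is_lim_seq (gauss_seq x) (Gamma x).
Proof.
  intros Hx. destruct (ex_finite_lim_gauss_seq x Hx) as [L HL].
  unfold Gamma. change (fun t => Rpower t (x - 1) * exp (- t)) with (gamma_integrand x).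
  rewrite (is_RInt_gen_unique _ _ (is_RInt_gen_gamma_integrand x L Hx HL)). exact HL.
Qed.

(** * Euler's sine product *)

Lemma le_of_derive_nonneg (F F' : R -> R) (u : R) : 0 <= u ->
  (forall v, 0 <= v <= u -> is_derive F v (F' v)) ->
  (forall v, 0 <= v <= u -> continuous F' v) ->
  (forall v, 0 < v < u -> 0 <= F' v) -> F 0 <= F u.
Proof.
  intros Hu HF HF' Hpos.
  pose proof (is_RInt_antiderivative F F' 0 u Hu HF HF') as HI.
  pose proof (is_RInt_ge_0 _ _ _ _ Hu HI Hpos). lra.
Qed.

Lemma one_minus_cos_le (u : R) : 0 <= u -> 1 - cos u <= u ^ 2 / 2.
Proof.
  intros Hu.
  pose proof (le_of_derive_nonneg (fun v => v ^ 2 / 2 - 1 + cos v) (fun v => v - sin v) u Hu)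
    as Hle.
  cbv beta in Hle. rewrite cos_0 in Hle.
  enough (0 ^ 2 / 2 - 1 + 1 <= u ^ 2 / 2 - 1 + cos u) by (simpl in *; lra).
  apply Hle.
  - intros v _. auto_derive; auto. as_R_eq. field.
  - intros v _. continuous_by_derive. auto.
  - intros v Hv. pose proof (sin_lt_x v ltac:(lra)). lra.
Qed.

Lemma mul_cos_le_sin (t : R) : 0 <= t <= PI -> t * cos t <= sin t.
Proof.
  intros Ht.
  pose proof (le_of_derive_nonneg (fun v => sin v - v * cos v) (fun v => v * sin v) t
                ltac:(lra)) as Hle.
  cbv beta in Hle. rewrite sin_0, cos_0 in Hle.
  enough (0 - 0 * 1 <= sin t - t * cos t) by lra.
  apply Hle.
  - intros v _. auto_derive; auto. as_R_eq. ring.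
  - intros v _. continuous_by_derive. auto.
  - intros v Hv. apply Rmult_le_pos; [lra|]. apply sin_ge_0; lra.
Qed.

Definition wallis_integrand (x : R) (m : nat) (t : R) : R := cos (x * t) * cos t ^ m.

Definition wallis (x : R) (m : nat) : R := RInt (wallis_integrand x m) 0 (PI / 2).

Lemma PI2_gt_0 : 0 < PI / 2.
Proof. pose proof PI_RGT_0. lra. Qed.

Lemma is_RInt_wallis (x : R) (m : nat) : is_RInt (wallis_integrand x m) 0 (PI / 2) (wallis x m).
Proof.
  apply (RInt_correct (V := R_CompleteNormedModule)).
  apply ex_RInt_continuous_on; [pose proof PI2_gt_0; lra|].
  intros t _. unfold wallis_integrand. continuous_by_derive. auto.
Qed.

Lemma wallis_rec (x : R) (m : nat) :
  ((INR m + 2) ^ 2 - x ^ 2) * wallis x (S (S m)) = (INR m + 2) * (INR m + 1) * wallis x m.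
Proof.
  set (F := fun t => x * sin (x * t) * cos t ^ S (S m)
                     - (INR m + 2) * cos (x * t) * cos t ^ S m * sin t).
  set (G := fun t => (x ^ 2 - (INR m + 2) ^ 2) * wallis_integrand x (S (S m)) t
                     + (INR m + 2) * (INR m + 1) * wallis_integrand x m t).
  assert (HF : is_RInt G 0 (PI / 2) (F (PI / 2) - F 0)).
  { apply (is_RInt_antiderivative F); [pose proof PI2_gt_0; lra | |].
    - intros t _. unfold F, G, wallis_integrand. auto_derive; auto.
      change (match m with 0%nat => 1 | S _ => INR m + 1 end) with (INR (S m)).
      rewrite <- ?tech_pow_Rmult, ?S_INR. as_R_eq.
      apply Rminus_diag_uniq.
      match goal with |- ?E = 0 =>
        replace E with ((INR m + 2) * (INR m + 1) * cos (x * t) * cos t ^ m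
                        * (sin t ^ 2 + cos t ^ 2 - 1)) by ring end.
      rewrite <- (sin2_cos2 t). unfold Rsqr. ring.
    - intros t _. unfold G, wallis_integrand. continuous_by_derive. auto. }
  assert (HW : is_RInt G 0 (PI / 2) ((x ^ 2 - (INR m + 2) ^ 2) * wallis x (S (S m))
                                      + (INR m + 2) * (INR m + 1) * wallis x m))
    by exact (is_RInt_plus _ _ _ _ _ _
      (is_RInt_scal _ _ _ _ _ (is_RInt_wallis x (S (S m))))
      (is_RInt_scal _ _ _ _ _ (is_RInt_wallis x m))).
  pose proof (is_RInt_unique _ _ _ _ HF) as E.
  rewrite (is_RInt_unique _ _ _ _ HW) in E.
  unfold F in E. rewrite cos_PI2, sin_0, Rmult_0_r, sin_0 in E. simpl in E. lra.
Qed.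

Lemma wallis_0_r (x : R) : x <> 0 -> wallis x 0 = sin (x * (PI / 2)) / x.
Proof.
  intros Hx. apply is_RInt_unique.
  replace (sin (x * (PI / 2)) / x) with (sin (x * (PI / 2)) / x - sin (x * 0) / x)
    by (rewrite Rmult_0_r, sin_0; unfold Rdiv; ring).
  apply (is_RInt_antiderivative (fun t => sin (x * t) / x)); [pose proof PI2_gt_0; lra | |].
  - intros t _. unfold wallis_integrand. auto_derive; auto. simpl. as_R_eq. field. exact Hx.
  - intros t _. unfold wallis_integrand. continuous_by_derive. auto.
Qed.

Lemma wallis_0_0 : wallis 0 0 = PI / 2.
Proof.
  apply is_RInt_unique. replace (PI / 2) with (PI / 2 - 0) at 2 by ring.
  apply (is_RInt_antiderivative (fun t => t)); [pose proof PI2_gt_0; lra | |].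
  - intros t _. unfold wallis_integrand. auto_derive; auto. rewrite Rmult_0_l, cos_0. ring.
  - intros t _. unfold wallis_integrand. continuous_by_derive. auto.
Qed.

Lemma wallis_0_even_gt_0 (N : nat) : 0 < wallis 0 (2 * N).
Proof.
  induction N as [|N IHN]; [change (2 * 0)%nat with 0%nat; rewrite wallis_0_0; apply PI2_gt_0|].
  replace (2 * S N)%nat with (S (S (2 * N))) by lia.
  pose proof (wallis_rec 0 (2 * N)) as Hrec. pose proof (pos_INR (2 * N)).
  replace (wallis 0 (S (S (2 * N))))
    with ((INR (2 * N) + 2) * (INR (2 * N) + 1) * wallis 0 (2 * N) / (INR (2 * N) + 2) ^ 2)
    by (rewrite <- Hrec; field; lra).
  apply Rdiv_lt_0_compat; [|nra]. apply Rmult_lt_0_compat; [nra | exact IHN].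
Qed.

Fixpoint sine_partial_prod (y : R) (N : nat) : R :=
  match N with
  | O => 1
  | S N' => sine_partial_prod y N' * (1 - y ^ 2 / INR (S N') ^ 2)
  end.

Lemma wallis_sine_partial_prod (y : R) (N : nat) : 0 < y < 1 ->
  wallis (2 * y) (2 * N) * sine_partial_prod y N * (PI * y) = sin (PI * y) * wallis 0 (2 * N).
Proof.
  intros Hy. induction N as [|N IHN].
  - change (2 * 0)%nat with 0%nat. cbn [sine_partial_prod].
    rewrite wallis_0_r, wallis_0_0 by lra.
    replace (2 * y * (PI / 2)) with (PI * y) by field. field. lra.
  - replace (2 * S N)%nat with (S (S (2 * N))) by lia.
    pose proof (wallis_rec (2 * y) (2 * N)) as H1. pose proof (wallis_rec 0 (2 * N)) as H2.
    rewrite mult_INR in H1, H2. replace (INR 2) with 2 in H1, H2 by (simpl; ring).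
    pose proof (pos_INR N).
    change (sine_partial_prod y (S N)) with (sine_partial_prod y N * (1 - y ^ 2 / INR (S N) ^ 2)).
    rewrite S_INR.
    apply Rmult_eq_reg_r with ((2 * INR N + 2) ^ 2); [|nra].
    transitivity (((2 * INR N + 2) ^ 2 - (2 * y) ^ 2) * wallis (2 * y) (S (S (2 * N)))
                  * sine_partial_prod y N * (PI * y)); [field; lra|].
    rewrite H1.
    transitivity ((2 * INR N + 2) * (2 * INR N + 1)
                  * (wallis (2 * y) (2 * N) * sine_partial_prod y N * (PI * y))); [ring|].
    rewrite IHN.
    transitivity (sin (PI * y) * (((2 * INR N + 2) ^ 2 - 0 ^ 2) * wallis 0 (S (S (2 * N)))));
      [rewrite H2 | ]; ring.
Qed.

Lemma wallis_integrand_diff_bound (x t : R) (m : nat) : 0 <= x -> 0 < t < PI / 2 ->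
  0 <= wallis_integrand 0 (S (S m)) t - wallis_integrand x (S (S m)) t
    <= x ^ 2 / 2 * (wallis_integrand 0 m t - wallis_integrand 0 (S (S m)) t).
Proof.
  intros Hx Ht. unfold wallis_integrand. rewrite Rmult_0_l, cos_0. cbn [pow].
  assert (Hc : 0 <= cos t) by (apply cos_ge_0; lra).
  assert (Hcm : 0 <= cos t ^ m) by (apply pow_le, Hc).
  assert (Hcc : 0 <= cos t * cos t * cos t ^ m) by (apply Rmult_le_pos; [nra | exact Hcm]).
  pose proof (COS_bound (x * t)).
  pose proof (one_minus_cos_le (x * t) ltac:(nra)).
  assert (Htc : 0 <= t * cos t <= sin t) by (split; [nra | apply mul_cos_le_sin; lra]).
  pose proof (sin2_cos2 t) as Hsc. unfold Rsqr in Hsc.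
  replace (1 * (cos t * (cos t * cos t ^ m)) - cos (x * t) * (cos t * (cos t * cos t ^ m)))
    with ((1 - cos (x * t)) * (cos t * cos t * cos t ^ m)) by ring.
  replace (1 * cos t ^ m - 1 * (cos t * (cos t * cos t ^ m))) with (sin t * sin t * cos t ^ m)
    by (replace (sin t * sin t) with (1 - cos t * cos t) by lra; ring).
  split; [apply Rmult_le_pos; lra|].
  apply Rle_trans with ((x * t) ^ 2 / 2 * (cos t * cos t * cos t ^ m));
    [apply Rmult_le_compat_r; lra|].
  replace ((x * t) ^ 2 / 2 * (cos t * cos t * cos t ^ m))
    with (x ^ 2 / 2 * ((t * cos t) * (t * cos t) * cos t ^ m)) by (unfold Rdiv; ring).
  apply Rmult_le_compat_l; [nra|]. apply Rmult_le_compat_r; [exact Hcm|].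
  apply Rmult_le_compat; lra.
Qed.

Lemma wallis_diff_bound (x : R) (m : nat) : 0 <= x ->
  0 <= wallis 0 (S (S m)) - wallis x (S (S m))
    <= x ^ 2 / 2 * (wallis 0 m - wallis 0 (S (S m))).
Proof.
  intros Hx. pose proof PI2_gt_0.
  pose proof (is_RInt_minus _ _ _ _ _ _ (is_RInt_wallis 0 (S (S m))) (is_RInt_wallis x (S (S m))))
    as Hd.
  pose proof (is_RInt_scal _ _ _ (x ^ 2 / 2) _
    (is_RInt_minus _ _ _ _ _ _ (is_RInt_wallis 0 m) (is_RInt_wallis 0 (S (S m))))) as Hb.
  change (minus ?u ?v) with (u - v) in Hd, Hb. change (scal ?u ?v) with (u * v) in Hb.
  split.
  - apply (is_RInt_ge_0 _ 0 (PI / 2) _ ltac:(lra) Hd). intros t Ht.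
    apply wallis_integrand_diff_bound; auto.
  - apply (is_RInt_le _ _ 0 (PI / 2) _ _ ltac:(lra) Hd Hb). intros t Ht.
    apply wallis_integrand_diff_bound; auto.
Qed.

Lemma is_lim_seq_wallis_ratio (y : R) : 0 <= y ->
  is_lim_seq (fun N => wallis (2 * y) (2 * S N) / wallis 0 (2 * S N)) 1.
Proof.
  intros Hy. apply is_lim_seq_of_bound with (c := 2 * y ^ 2). intros N.
  pose proof (wallis_0_even_gt_0 (S N)) as Hpos.
  replace (2 * S N)%nat with (S (S (2 * N))) in * by lia.
  pose proof (wallis_diff_bound (2 * y) (2 * N) ltac:(lra)) as Hb.
  pose proof (wallis_rec 0 (2 * N)) as Hrec.
  rewrite mult_INR in Hrec. replace (INR 2) with 2 in Hrec by (simpl; ring).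
  pose proof (pos_INR N).
  set (w0 := wallis 0 (S (S (2 * N)))) in *. set (w1 := wallis 0 (2 * N)) in *.
  set (w2 := wallis (2 * y) (S (S (2 * N)))) in *.
  assert (Hdiff : w1 - w0 = w0 / (2 * INR N + 1)).
  { apply Rmult_eq_reg_l with ((2 * INR N + 2) * (2 * INR N + 1)); [|nra].
    rewrite Rmult_minus_distr_l, <- Hrec. field. lra. }
  rewrite Hdiff in Hb.
  replace (w2 / w0 - 1) with (- ((w0 - w2) / w0)) by (field; lra).
  rewrite Rabs_Ropp, Rabs_pos_eq by (apply Rdiv_le_0_compat; lra).
  apply Rle_div_l; [lra|]. rewrite S_INR.
  replace (2 * y ^ 2 / (INR N + 1) * w0) with ((2 * y) ^ 2 / 2 * (w0 / (INR N + 1)))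
    by (field; lra).
  eapply Rle_trans; [apply Hb|]. apply Rmult_le_compat_l; [nra|].
  apply Rmult_le_compat_l; [lra | apply Rinv_le_contravar; lra].
Qed.

(* By [wallis_sine_partial_prod], the partial products are sin(PI y) / (PI y) divided by
   a ratio of Wallis integrals that tends to 1. *)
Lemma is_lim_seq_sine_partial_prod (y : R) : 0 < y < 1 ->
  is_lim_seq (sine_partial_prod y) (sin (PI * y) / (PI * y)).
Proof.
  intros Hy. pose proof PI_RGT_0.
  assert (Hs : 0 < sin (PI * y)) by (apply sin_gt_0; nra).
  assert (Hw : forall N, wallis (2 * y) (2 * S N) <> 0).
  { intros N E. pose proof (wallis_sine_partial_prod y (S N) Hy) as Hp. rewrite E in Hp.
    pose proof (wallis_0_even_gt_0 (S N)).
    assert (0 < sin (PI * y) * wallis 0 (2 * S N)) by (apply Rmult_lt_0_compat; auto). lra. }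
  apply is_lim_seq_incr_1.
  apply is_lim_seq_ext with
    (fun N => sin (PI * y) / (PI * y) * / (wallis (2 * y) (2 * S N) / wallis 0 (2 * S N))).
  - intros N. pose proof (wallis_sine_partial_prod y (S N) Hy) as Hp.
    pose proof (wallis_0_even_gt_0 (S N)). specialize (Hw N).
    symmetry. apply Rmult_eq_reg_r with (wallis (2 * y) (2 * S N) * (PI * y));
      [| apply Rmult_integral_contrapositive; split; [auto | nra]].
    transitivity (wallis (2 * y) (2 * S N) * sine_partial_prod y (S N) * (PI * y)); [ring|].
    rewrite Hp. field. repeat split; lra.
  - replace (Finite (sin (PI * y) / (PI * y)))
      with (Rbar_mult (sin (PI * y) / (PI * y)) (Rbar_inv 1))
      by (simpl; rewrite Rinv_1, Rmult_1_r; reflexivity).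
    apply is_lim_seq_scal_l, is_lim_seq_inv; [apply is_lim_seq_wallis_ratio; lra |].
    intros E; injection E; lra.
Qed.

(** * The reflection formula *)

Lemma rising_mul_rising_one_minus (x : R) (k : nat) :
  rising x k * rising (1 - x) k = x * (INR k + 1 - x) * INR (fact k) ^ 2 * sine_partial_prod x k.
Proof.
  induction k as [|k IHk]; [simpl; ring|].
  rewrite !rising_S.
  transitivity (rising x k * rising (1 - x) k * ((x + INR (S k)) * (1 - x + INR (S k)))); [ring|].
  rewrite IHk. cbn [sine_partial_prod].
  change (fact (S k)) with (S k * fact k)%nat. rewrite mult_INR, !S_INR.
  pose proof (pos_INR k). field. lra.
Qed.

Lemma gauss_seq_mul_one_minus (x : R) (n : nat) : 0 < x < 1 ->
  gauss_seq x n * gauss_seq (1 - x) n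
  = INR (S n) / (INR (S n) + 1 - x) * / (x * sine_partial_prod x (S n)).
Proof.
  intros Hx. unfold gauss_seq. pose proof (INR_S_ge_1 n).
  assert (Hpow : Rpower (INR (S n)) x * Rpower (INR (S n)) (1 - x) = INR (S n)).
  { rewrite <- Rpower_plus. replace (x + (1 - x)) with 1 by ring. apply Rpower_1. lra. }
  pose proof (rising_mul_rising_one_minus x (S n)) as Hr.
  pose proof (rising_gt_0 (S n) x ltac:(lra)). pose proof (rising_gt_0 (S n) (1 - x) ltac:(lra)).
  pose proof (INR_fact_lt_0 (S n)).
  assert (HP : sine_partial_prod x (S n) <> 0).
  { intros E. rewrite E, Rmult_0_r in Hr.
    assert (0 < rising x (S n) * rising (1 - x) (S n)) by (apply Rmult_lt_0_compat; auto). lra. }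
  transitivity (Rpower (INR (S n)) x * Rpower (INR (S n)) (1 - x) * INR (fact (S n)) ^ 2
                / (rising x (S n) * rising (1 - x) (S n))); [field; lra|].
  rewrite Hpow, Hr. field. repeat split; lra.
Qed.

Theorem Gamma_reflection (x : R) : 0 < x < 1 -> Gamma x * Gamma (1 - x) = PI / sin (PI * x).
Proof.
  intros Hx. pose proof PI_RGT_0.
  assert (Hs : 0 < sin (PI * x)) by (apply sin_gt_0; nra).
  pose proof (is_lim_seq_mult' _ _ _ _ (is_lim_seq_gauss_seq x Hx)
                (is_lim_seq_gauss_seq (1 - x) ltac:(lra))) as Hprod.
  assert (Hlim : is_lim_seq (fun n => gauss_seq x n * gauss_seq (1 - x) n) (PI / sin (PI * x))).
  { apply is_lim_seq_ext
      with (fun n => INR (S n) / (INR (S n) + 1 - x) * / (x * sine_partial_prod x (S n))).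
    { intros n. symmetry. apply gauss_seq_mul_one_minus, Hx. }
    replace (PI / sin (PI * x)) with (1 * / (x * (sin (PI * x) / (PI * x)))) by (field; split; lra).
    apply is_lim_seq_mult'.
    - apply is_lim_seq_of_bound with (c := 1). intros n. pose proof (INR_S_ge_1 n).
      replace (INR (S n) / (INR (S n) + 1 - x) - 1) with (- ((1 - x) / (INR (S n) + 1 - x)))
        by (field; lra).
      rewrite Rabs_Ropp, Rabs_pos_eq by (apply Rlt_le, Rdiv_lt_0_compat; lra).
      unfold Rdiv. apply Rmult_le_compat; [lra | apply Rlt_le, Rinv_0_lt_compat; lra | lra |].
      apply Rinv_le_contravar; lra.
    - assert (0 < x * (sin (PI * x) / (PI * x)))
        by (apply Rmult_lt_0_compat; [lra | apply Rdiv_lt_0_compat; nra]).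
      apply (is_lim_seq_inv _ (x * (sin (PI * x) / (PI * x))));
        [| intros E; injection E; lra].
      apply (is_lim_seq_scal_l _ x (sin (PI * x) / (PI * x))).
      apply (proj1 (is_lim_seq_incr_1 (sine_partial_prod x) _)), is_lim_seq_sine_partial_prod, Hx. }
  pose proof (is_lim_seq_unique _ _ Hprod) as E.
  rewrite (is_lim_seq_unique _ _ Hlim) in E. injection E. auto.
Qed.

(** * The exponents omega and the factorisation *)

Lemma ee_plus (u v : R) : ee (u + v) = Cmult (ee u) (ee v).
Proof.
  unfold ee, Cmult. simpl.
  replace (2 * PI * (u + v)) with (2 * PI * u + 2 * PI * v) by ring.
  rewrite cos_plus, sin_plus. f_equal; ring.
Qed.

Lemma ee_IZR (z : Z) : ee (IZR z) = RtoC 1.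
Proof.
  assert (Hnat : forall k, ee (INR k) = RtoC 1).
  { intros k. unfold ee. replace (2 * PI * INR k) with (0 + 2 * INR k * PI) by ring.
    rewrite cos_period, sin_period, cos_0, sin_0. reflexivity. }
  destruct z as [|p|p].
  - apply (Hnat 0%nat).
  - rewrite <- positive_nat_Z, <- INR_IZR_INZ. apply Hnat.
  - change (IZR (Z.neg p)) with (- IZR (Z.pos p)).
    rewrite <- positive_nat_Z, <- INR_IZR_INZ.
    pose proof (Hnat (Pos.to_nat p)) as H. unfold ee in *.
    replace (2 * PI * - INR (Pos.to_nat p)) with (- (2 * PI * INR (Pos.to_nat p))) by ring.
    rewrite cos_neg, sin_neg. injection H as Hc Hs. rewrite Hc, Hs, Ropp_0. reflexivity.
Qed.

Lemma ee_plus_IZR (u : R) (z : Z) : ee (u + IZR z) = ee u.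
Proof. rewrite ee_plus, ee_IZR. apply Cmult_1_r. Qed.

Lemma ee_pow (u : R) (k : nat) : Cpow (ee u) k = ee (INR k * u).
Proof.
  induction k as [|k IHk].
  - simpl. rewrite Rmult_0_l. exact (eq_sym (ee_IZR 0)).
  - simpl Cpow. rewrite IHk, <- ee_plus, S_INR. f_equal. ring.
Qed.

Lemma cprod_ext (k : nat) (f g : nat -> C) :
  (forall l, (1 <= l <= k)%nat -> f l = g l) -> cprod k f = cprod k g.
Proof.
  revert f g; induction k as [|k IHk]; intros f g Hfg; cbn [cprod]; [reflexivity|].
  rewrite (IHk f g), (Hfg (S k)); [reflexivity | lia |].
  intros l Hl. apply Hfg. lia.
Qed.

Lemma cprod_mult (k : nat) (f g : nat -> C) :
  cprod k (fun l => Cmult (f l) (g l)) = Cmult (cprod k f) (cprod k g).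
Proof. induction k as [|k IHk]; cbn [cprod]; [ring | rewrite IHk; ring]. Qed.

Lemma cprod_const (k : nat) (r : R) : cprod k (fun _ => RtoC r) = RtoC (r ^ k).
Proof. induction k as [|k IHk]; cbn [cprod pow]; [reflexivity | rewrite IHk, RtoC_mult; ring]. Qed.

Lemma ee_sum (g : nat -> R) (k : nat) :
  ee (sum_f_R0 g k) = cprod (S k) (fun l => ee (g (l - 1)%nat)).
Proof.
  induction k as [|k IHk].
  - cbn [cprod sum_f_R0]. rewrite Cmult_1_l. reflexivity.
  - cbn [sum_f_R0]. rewrite ee_plus, IHk.
    change (cprod (S (S k)) (fun l => ee (g (l - 1)%nat)))
      with (Cmult (cprod (S k) (fun l => ee (g (l - 1)%nat))) (ee (g (S (S k) - 1)%nat))).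
    replace (S (S k) - 1)%nat with (S k) by lia. reflexivity.
Qed.

Lemma ee_half_sum (f : nat -> R) (n : nat) : (1 <= n)%nat ->
  ee (/ 2 * sum_f_R0 (fun j => f (S j)) (n - 1)) = cprod n (fun l => ee (/ 2 * f l)).
Proof.
  intros Hn. rewrite scal_sum, ee_sum. replace (S (n - 1)) with n by lia.
  apply cprod_ext. intros l Hl. replace (S (l - 1)) with l by lia. f_equal. ring.
Qed.

Lemma frac_bounds (r : R) : 0 <= frac r < 1.
Proof. destruct (base_fp r). split; [apply Rge_le |]; assumption. Qed.

Lemma frac_gt_0 (r : R) : (forall z, r <> IZR z) -> 0 < frac r.
Proof.
  intros Hr. destruct (frac_bounds r) as [[Hlt | Heq] _]; [exact Hlt|].
  exfalso. apply (Hr (Int_part r)). unfold frac in Heq. lra.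
Qed.

Lemma frac_IZR_minus (z : Z) (r : R) : (forall z, r <> IZR z) -> frac (IZR z - r) = 1 - frac r.
Proof.
  intros Hr. pose proof (frac_gt_0 r Hr). pose proof (frac_bounds r).
  symmetry. apply (Int_part_frac_part_spec _ (z - Int_part r - 1)); [lra|].
  rewrite !minus_IZR. unfold frac. ring.
Qed.

Lemma frac_id (r : R) : 0 <= r < 1 -> frac r = r.
Proof.
  intros Hr. symmetry. apply (Int_part_frac_part_spec _ 0); [exact Hr | simpl; ring].
Qed.

Lemma pow_minus_one (k : nat) : (-1) ^ k = if Nat.even k then 1 else -1.
Proof.
  induction k as [|k IHk]; [reflexivity|].
  cbn [pow]. rewrite IHk, Nat.even_succ, <- Nat.negb_even.
  destruct (Nat.even k); simpl; ring.
Qed.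

Lemma cprod_even_indices (m : nat) (h : nat -> C) :
  cprod (2 * m) (fun l => if Nat.even l then h l else RtoC 1) = cprod m (fun i => h (2 * i)%nat).
Proof.
  induction m as [|m IHm]; [reflexivity|].
  replace (2 * S m)%nat with (S (S (2 * m))) by lia. cbn [cprod]. rewrite IHm.
  replace (Nat.even (S (S (2 * m)))) with true by (rewrite <- (Nat.even_even (S m)); f_equal; lia).
  replace (Nat.even (S (2 * m))) with false by (rewrite <- (Nat.even_odd m); f_equal; lia).
  replace (S (S (2 * m))) with (2 * S m)%nat by lia. rewrite Cmult_1_r. reflexivity.
Qed.

Lemma cprod_odd_indices (m : nat) (h : nat -> C) :
  cprod (2 * m + 1) (fun l => if Nat.odd l then h l else RtoC 1)
  = cprod (m + 1) (fun i => h (2 * i - 1)%nat).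
Proof.
  induction m as [|m IHm]; [reflexivity|].
  replace (2 * S m + 1)%nat with (S (S (2 * m + 1))) by lia.
  replace (S m + 1)%nat with (S (m + 1)) by lia. cbn [cprod]. rewrite IHm.
  replace (Nat.odd (S (S (2 * m + 1)))) with true by (rewrite <- (Nat.odd_odd (S m)); f_equal; lia).
  replace (Nat.odd (S (2 * m + 1))) with false by (rewrite <- (Nat.odd_even (S m)); f_equal; lia).
  replace (2 * S (m + 1) - 1)%nat with (S (S (2 * m + 1))) by lia. rewrite Cmult_1_r. reflexivity.
Qed.

Lemma cprod_parity (n : nat) (h : nat -> C) :
  (if Nat.odd n then cprod ((n + 1) / 2) (fun i => h (2 * i - 1)%nat)
   else cprod (n / 2) (fun i => h (2 * i)%nat))
  = cprod n (fun l => if Nat.even (n - l) then h l else RtoC 1).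
Proof.
  destruct (Nat.Even_or_Odd n) as [[m ->] | [m ->]].
  - rewrite Nat.odd_even, (Nat.mul_comm 2 m), Nat.div_mul, Nat.mul_comm by lia.
    rewrite <- cprod_even_indices. apply cprod_ext. intros l Hl.
    rewrite Nat.even_sub, Nat.even_even by lia. destruct (Nat.even l); reflexivity.
  - rewrite Nat.odd_odd.
    replace ((2 * m + 1 + 1) / 2)%nat with (m + 1)%nat
      by (replace (2 * m + 1 + 1)%nat with ((m + 1) * 2)%nat by lia; rewrite Nat.div_mul; lia).
    rewrite <- cprod_odd_indices. apply cprod_ext. intros l Hl.
    rewrite Nat.even_sub, Nat.even_odd, <- Nat.negb_odd by lia. destruct (Nat.odd l); reflexivity.
Qed.

Lemma cc_as_cprod (a : nat -> nat) (n k : nat) :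
  cc a n k = Cmult (cprod n (fun l => RtoC (Gamma (1 - omega a n k l))))
    (cprod n (fun l => if Nat.even (n - l) then Cminus (RtoC 1) (ee (omega a n k l)) else RtoC 1)).
Proof.
  unfold cc. rewrite (cprod_parity n (fun l => Cminus (RtoC 1) (ee (omega a n k l)))).
  reflexivity.
Qed.

Lemma dd_factor (a : nat -> nat) (n l : nat) : (1 <= l <= n)%nat ->
  exists q, dd a n = (dd a (l - 1) * q)%nat /\ Nat.divide (a n) q.
Proof.
  revert l; induction n as [|n IHn]; intros l Hl; [lia|].
  destruct (Nat.eq_dec l (S n)) as [-> | Hne].
  - exists (a (S n)). replace (S n - 1)%nat with n by lia.
    split; [reflexivity | apply Nat.divide_refl].
  - destruct (IHn l ltac:(lia)) as [q [Hq _]]. exists (q * a (S n))%nat. split.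
    + simpl. rewrite Hq. ring.
    + apply Nat.divide_factor_r.
Qed.

Section Omega.

Variables (a : nat -> nat) (n kappa : nat).
Hypothesis Ha : forall i, (1 <= i <= n)%nat -> (2 <= a i)%nat.
Hypothesis Hn : (1 <= n)%nat.
Hypothesis Hk : (1 <= kappa <= dd a n)%nat.
Hypothesis Hdiv : ~ Nat.divide (a n) kappa.

Let theta (k l : nat) : R := (-1) ^ (l - 1) * INR (dd a (l - 1)) / INR (dd a n) * INR k.

Lemma dd_gt_0 (i : nat) : (i <= n)%nat -> 0 < INR (dd a i).
Proof.
  intros Hi. apply lt_0_INR. induction i as [|i IHi]; simpl; [lia|].
  specialize (IHi ltac:(lia)). specialize (Ha (S i) ltac:(lia)). nia.
Qed.

(* With d_n = d_{l-1} q and a_n | q, an integral value of theta would make q,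
   hence a_n, divide kappa. *)
Lemma theta_not_IZR (l : nat) : (1 <= l <= n)%nat -> forall z, theta kappa l <> IZR z.
Proof.
  intros Hl z E. destruct (dd_factor a n l Hl) as [q [Hq Hq_div]].
  pose proof (dd_gt_0 (l - 1) ltac:(lia)) as Hd. pose proof (dd_gt_0 n (le_n n)) as HD.
  rewrite Hq, mult_INR in HD. assert (Hq0 : 0 < INR q) by nra.
  apply Hdiv, (Nat.divide_trans _ q _ Hq_div). exists (Z.abs_nat z). apply INR_eq.
  apply (f_equal Rabs) in E. unfold theta in E.
  rewrite <- abs_IZR, <- Zabs2Nat.id_abs, <- INR_IZR_INZ in E. rewrite mult_INR, <- E, Hq, mult_INR.
  replace ((-1) ^ (l - 1) * INR (dd a (l - 1)) / (INR (dd a (l - 1)) * INR q) * INR kappa)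
    with ((-1) ^ (l - 1) * (INR kappa / INR q)) by (field; lra).
  rewrite Rabs_mult, pow_1_abs, Rabs_pos_eq by (apply Rdiv_le_0_compat; [apply pos_INR | lra]).
  field. lra.
Qed.

Lemma omega_bounds (l : nat) : (1 <= l <= n)%nat -> 0 < omega a n kappa l < 1.
Proof.
  intros Hl. split; [apply frac_gt_0, theta_not_IZR, Hl | apply frac_bounds].
Qed.

Lemma omega_complement (l : nat) : (1 <= l <= n)%nat ->
  omega a n (dd a n - kappa) l = 1 - omega a n kappa l.
Proof.
  intros Hl. pose proof (dd_gt_0 n (le_n n)).
  unfold omega. fold (theta (dd a n - kappa) l) (theta kappa l).
  rewrite <- (frac_IZR_minus ((-1) ^ Z.of_nat (l - 1) * Z.of_nat (dd a (l - 1))) _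
                (theta_not_IZR l Hl)).
  f_equal. unfold theta.
  rewrite minus_INR by lia. rewrite mult_IZR, <- pow_IZR, <- INR_IZR_INZ. field. lra.
Qed.

Lemma kappa_lt_dd : (kappa < dd a n)%nat.
Proof.
  destruct (Nat.eq_dec kappa (dd a n)) as [E | E]; [|lia].
  exfalso. apply Hdiv. rewrite E. destruct n as [|n']; [lia|]. apply Nat.divide_factor_r.
Qed.

Lemma omega_1 : omega a n kappa 1 = INR kappa / INR (dd a n).
Proof.
  pose proof (dd_gt_0 n (le_n n)). pose proof (lt_INR _ _ kappa_lt_dd).
  unfold omega. simpl.
  replace (1 * 1 / INR (dd a n) * INR kappa) with (INR kappa / INR (dd a n)) by (field; lra).
  apply frac_id. split.
  - apply Rdiv_le_0_compat; [apply pos_INR | lra].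
  - apply Rlt_div_l; lra.
Qed.

Lemma ee_omega_1_pow (l : nat) : (1 <= l <= n)%nat ->
  Cpow (ee ((-1) ^ (n - 1) * omega a n kappa 1)) (dd a (l - 1))
  = ee ((-1) ^ (n - l) * omega a n kappa l).
Proof.
  intros Hl. pose proof (dd_gt_0 n (le_n n)).
  rewrite ee_pow, omega_1. unfold omega. fold (theta kappa l).
  rewrite <- (ee_plus_IZR (_ * frac _) ((-1) ^ Z.of_nat (n - l) * Int_part (theta kappa l))).
  f_equal. rewrite mult_IZR, <- pow_IZR. unfold frac, theta.
  replace (n - 1)%nat with (n - l + (l - 1))%nat by lia. rewrite pow_add. field. lra.
Qed.

Lemma cc_complement_as_cprod :
  cc a n (dd a n - kappa)
  = Cmult (cprod n (fun l => RtoC (Gamma (omega a n kappa l))))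
      (cprod n (fun l => if Nat.even (n - l) then Cminus (RtoC 1) (ee (- omega a n kappa l))
                         else RtoC 1)).
Proof.
  rewrite cc_as_cprod. f_equal; apply cprod_ext; intros l Hl; rewrite omega_complement by exact Hl.
  - do 2 f_equal. ring.
  - replace (1 - omega a n kappa l) with (- omega a n kappa l + IZR 1) by (simpl; ring).
    rewrite ee_plus_IZR. reflexivity.
Qed.

End Omega.

Lemma one_minus_ee_opp_neq_0 (w : R) : 0 < w < 1 -> Cminus (RtoC 1) (ee (- w)) <> RtoC 0.
Proof.
  intros Hw E. pose proof PI_RGT_0.
  assert (Hs : 0 < sin (PI * w)) by (apply sin_gt_0; nra).
  apply (f_equal fst) in E. unfold ee, Cminus, RtoC in E. simpl in E.
  replace (2 * PI * - w) with (- (2 * (PI * w))) in E by ring.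
  rewrite cos_neg, cos_2a_sin in E. nra.
Qed.

Lemma reflection_factor (w : R) : 0 < w < 1 ->
  Cmult (Cmult (Cmult (RtoC (/ (2 * PI))) (RtoC (Gamma (1 - w)))) (RtoC (Gamma w)))
    (ee (/ 2 * (w - / 2)))
  = Cinv (Cminus (RtoC 1) (ee (- w))).
Proof.
  intros Hw. pose proof PI_RGT_0.
  assert (Hs : 0 < sin (PI * w)) by (apply sin_gt_0; nra).
  rewrite <- !RtoC_mult.
  replace (/ (2 * PI) * Gamma (1 - w) * Gamma w) with (/ (2 * sin (PI * w)))
    by (rewrite Rmult_assoc, (Rmult_comm (Gamma (1 - w))), Gamma_reflection by exact Hw;
        field; lra).
  unfold ee, Cminus, Cinv, Cmult, RtoC. simpl.
  replace (2 * PI * (/ 2 * (w - / 2))) with (- (PI / 2 - PI * w)) by field.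
  replace (2 * PI * - w) with (- (2 * (PI * w))) by ring.
  rewrite cos_neg, sin_neg, cos_shift, sin_shift, cos_neg, sin_neg, cos_2a_sin, sin_2a.
  set (s := sin (PI * w)). set (c := cos (PI * w)).
  assert (Hsc : s * s + c * c = 1)
    by (pose proof (sin2_cos2 (PI * w)) as H1; unfold Rsqr in H1; exact H1).
  replace ((1 + - (1 - 2 * s * s)) * ((1 + - (1 - 2 * s * s)) * 1)
           + (0 + - - (2 * s * c)) * ((0 + - - (2 * s * c)) * 1)) with (4 * (s * s))
    by (transitivity (4 * (s * s) * (s * s + c * c)); [rewrite Hsc|]; ring).
  assert (s <> 0) by (unfold s; lra). f_equal; field; auto.
Qed.

Lemma reflection_factor_parity (w : R) (b : bool) : 0 < w < 1 ->
  Cmult (Cmult (Cmult (Cmult (Cmult (RtoC (/ (2 * PI))) (RtoC (Gamma (1 - w))))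
      (if b then Cminus (RtoC 1) (ee w) else RtoC 1)) (ee (/ 2 * (w - / 2))))
      (RtoC (Gamma w))) (if b then Cminus (RtoC 1) (ee (- w)) else RtoC 1)
  = if b then Cminus (RtoC 1) (ee w) else Cinv (Cminus (RtoC 1) (ee (- w))).
Proof.
  intros Hw. pose proof (reflection_factor w Hw) as Hr.
  set (X := Cmult (Cmult (Cmult (RtoC (/ (2 * PI))) (RtoC (Gamma (1 - w)))) (RtoC (Gamma w)))
              (ee (/ 2 * (w - / 2)))) in Hr.
  destruct b.
  - transitivity (Cmult (Cmult X (Cminus (RtoC 1) (ee w))) (Cminus (RtoC 1) (ee (- w))));
      [unfold X; ring|].
    rewrite Hr. field. apply one_minus_ee_opp_neq_0, Hw.
  - rewrite <- Hr. unfold X. ring.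
Qed.

Theorem lemma4p1 (a : nat -> nat) (n kappa : nat)
  (Ha : forall i, (1 <= i <= n)%nat -> (2 <= a i)%nat)
  (Hn : (1 <= n)%nat)
  (Hk : (1 <= kappa <= dd a n)%nat)
  (Hdiv : ~ Nat.divide (a n) kappa) :
  Cmult (Cmult (Cmult (Cmult (RtoC (/ (2 * PI) ^ n)) (cc a n kappa))
      (ee (/ 2 * sum_f_R0 (fun j => omega a n kappa (S j) - / 2) (n - 1))))
      (RtoC (/ INR (dd a n))))
    (cc a n (dd a n - kappa))
  = Cmult (RtoC (/ INR (dd a n)))
      (pp a n (ee ((-1) ^ (n - 1) * omega a n kappa 1))).
Proof.
  rewrite <- pow_inv, <- cprod_const, (ee_half_sum (fun l => omega a n kappa l - / 2)) by exact Hn.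
  rewrite cc_as_cprod, (cc_complement_as_cprod a n kappa Ha Hn Hk Hdiv).
  transitivity (Cmult (RtoC (/ INR (dd a n))) (cprod n (fun l =>
    Cmult (Cmult (Cmult (Cmult (Cmult (RtoC (/ (2 * PI))) (RtoC (Gamma (1 - omega a n kappa l))))
      (if Nat.even (n - l) then Cminus (RtoC 1) (ee (omega a n kappa l)) else RtoC 1))
      (ee (/ 2 * (omega a n kappa l - / 2)))) (RtoC (Gamma (omega a n kappa l))))
      (if Nat.even (n - l) then Cminus (RtoC 1) (ee (- omega a n kappa l)) else RtoC 1))));
    [rewrite !cprod_mult; ring|].
  f_equal. unfold pp. apply cprod_ext. intros l Hl.
  rewrite (ee_omega_1_pow a n kappa Ha Hn Hk Hdiv l Hl), pow_minus_one.
  rewrite reflection_factor_parity by (apply (omega_bounds a n kappa); auto).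
  destruct (Nat.even (n - l)); do 3 f_equal; ring.
Qed.
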